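(* Let $G$ be a graph with $n$ vertices and adjacency matrix $A$. (i) If all eigenvalues of $A$ are equal to $\pm 1$, then $G=\frac{n}{2}K_2$. (ii) If all but one eigenvalue of $A$ (counted with multiplicity) are equal to $\pm 1$, then $G$ is a disjoint union of complete graphs in which all but one of the connected components are equal to $K_2$. (iii) If $A$ has exactly two eigenvalues $r$ and $s$ with $r\geq s$ (counted with multiplicity) different from $\pm 1$, then either $r>1$ and $s<-1$, or $G$ is a disjoint union of complete graphs with exactly two connected components different from $K_2$.
   Context: Graphs are finite, simple and undirected. Eigenvalues of a graph are those of its adjacency matrix. $\frac{n}{2}K_2$ denotes the disjoint union of $n/2$ copies of the complete graph $K_2$ (a perfect matching). *)

(* Eigenvalues taken over algC (algebraically closed), so the
   characteristic polynomial splits and eigenvalues with multiplicity are the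
   multiset of roots of char_poly. *)
From HB Require Import structures.
From mathcomp Require Import all_boot all_order all_algebra all_field.
Set Implicit Arguments. Unset Strict Implicit. Unset Printing Implicit Defensive.
Import Order.TTheory GRing.Theory Num.Theory.
Local Open Scope ring_scope.

(* A simple graph on vertex set 'I_n is a symmetric irreflexive relation e. *)

Definition adjmx (n : nat) (e : rel 'I_n) : 'M[algC]_n :=
  \matrix_(i, j) (e i j)%:R.

Definition eigenvalues_of (n : nat) (A : 'M[algC]_n) (s : seq algC) : Prop :=
  char_poly A = \prod_(x <- s) ('X - x%:P).

Definition pm1 (x : algC) : bool := (x == 1) || (x == -1).

(* G = (n/2) K_2 : every vertex has exactly one neighbour. *)
Definition perfect_matching_graph (n : nat) (e : rel 'I_n) : Prop :=
  forall x, #|[set y | e x y]| = 1%N.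

Definition comp (n : nat) (e : rel 'I_n) (x : 'I_n) : {set 'I_n} :=
  [set y | connect e x y].

Definition comps (n : nat) (e : rel 'I_n) : {set {set 'I_n}} :=
  [set comp e x | x : 'I_n].

Definition union_of_cliques (n : nat) (e : rel 'I_n) : Prop :=
  forall x y, connect e x y -> x != y -> e x y.

(* In a union of cliques, a component is K_2 iff it has exactly 2 vertices. *)
Definition is_K2_comp (n : nat) (C : {set 'I_n}) : bool := #|C| == 2%N.

(* The adjacency matrix A is Hermitian, so by the spectral theorem the rank
   of A^2 - 1 is the number of eigenvalues different from 1 and -1, and the
   quadratic form of A is bounded by its extreme eigenvalues.  In (i) this
   rank is 0, so A^2 = 1 and every vertex has degree one.  If the spectrum
   lies in [-1, +oo) (resp. (-oo, 1]), testing the quadratic form on the vector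
   (1, -1, 1) (resp. (1, 1, 1)) supported by a path a - b - c forces a ~ c, so
   G has no induced P3 and is a disjoint union of cliques.  For such a graph
   (A^2 - 1)_vw = [v ~* w] (|C_v| - 2), which factors as X^T diag(|C| - 2) X
   through the incidence matrix X of the components other than K2; the rows
   of X are orthogonal, so the rank of A^2 - 1 counts these components.
   Unless r > 1 and s < -1, one of the two one-sided bounds holds in (ii)
   and (iii). *)

From Pilot Require Import Defs.
From HB Require Import structures.
From mathcomp Require Import all_boot all_order all_algebra all_field.
From mathcomp Require Import ring.
Set Implicit Arguments. Unset Strict Implicit. Unset Printing Implicit Defensive.
Import Order.TTheory GRing.Theory Num.Theory.
Local Open Scope ring_scope.
Local Open Scope sesquilinear_scope.

Lemma char_poly_similar (F : fieldType) n (P A : 'M[F]_n) : P \in unitmx ->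
  char_poly (invmx P *m A *m P) = char_poly A.
Proof.
move=> Pu; rewrite /char_poly /char_poly_mx !map_mxM map_invmx.
set Q := map_mx polyC P; have Qu : Q \in unitmx by rewrite map_unitmx.
have XQ : ('X%:M : 'M_n) = invmx Q *m 'X%:M *m Q.
  by rewrite -mulmxA -scalar_mxC mulmxA mulVmx // mul1mx.
rewrite {1}XQ -mulmxBl -mulmxBr !det_mulmx mulrAC -det_mulmx mulVmx //.
by rewrite det1 mul1r.
Qed.

Lemma mxrank_diag (F : fieldType) m (d : 'rV[F]_m) :
  \rank (diag_mx d) = count (fun i => d 0 i != 0) (enum 'I_m).
Proof.
elim: m d => [|m IHm] d.
  by rewrite flatmx0 mxrank0; case: (enum _) (size_enum_ord 0).
have -> : diag_mx d = block_mx (diag_mx (lsubmx (d : 'rV_(1 + m)))) 0 0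
                               (diag_mx (rsubmx (d : 'rV_(1 + m)))).
  by rewrite -diag_mx_row hsubmxK.
rewrite (@rank_diag_block_mx _ 1 1 m m) IHm enum_ordSl /= count_map; congr (_ + _)%N.
  have [d0|d0] := eqVneq (d 0 ord0) 0.
    by apply/eqP; rewrite mxrank_eq0; apply/eqP/matrixP => i j;
       rewrite !ord1 !mxE -d0 /=; congr (d _ _); exact: val_inj.
  rewrite mxrank_unit // unitmxE det_diag big_ord1 mxE unitfE.
  by rewrite (_ : lshift m 0 = ord0) //; exact: val_inj.
by apply: eq_count => i /=; rewrite mxE; congr (d _ _ != 0); exact: val_inj.
Qed.

Lemma mxrank_unitary_conj (C : numClosedFieldType) n (U B : 'M[C]_n) : U \is unitarymx ->
  \rank (U^t* *m B *m U) = \rank B.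
Proof.
move=> U_unitary; have Uu := unitarymx_unit U_unitary.
have Utu : U^t* \in unitmx by rewrite -invmx_unitary // unitmx_inv.
by rewrite mxrankMfree ?row_free_unit // eqmxMfull ?row_full_unit.
Qed.

Lemma diag_formE (C : numClosedFieldType) m (y D : 'rV[C]_m) :
  (y *m diag_mx D *m y^t*) 0 0 = \sum_k D 0 k * (y 0 k * (y 0 k)^*).
Proof.
by rewrite mxE; apply: eq_bigr => k _; rewrite mul_mx_diag !mxE mulrCA mulrA.
Qed.

Section HermitianSpectrum.
Variables (n : nat) (A : 'M[algC]_n) (s : seq algC).
Hypotheses (A_herm : A \is hermsymmx) (A_eig : eigenvalues_of A s).

Local Notation P := (spectralmx A).
Local Notation d := (spectral_diag A).

Lemma hermitian_spectral_decomp : A = P^t* *m diag_mx d *m P.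
Proof.
have /orthomx_spectralP {1}-> := hermitian_normalmx A_herm.
by rewrite invmx_unitary // spectral_unitarymx.
Qed.

Lemma eigenvalues_hermitianE : perm_eq s [seq d 0 i | i <- enum 'I_n].
Proof.
apply: prod_XsubC_eq; rewrite -A_eig.
have /orthomx_spectralP {1}-> := hermitian_normalmx A_herm.
rewrite char_poly_similar ?spectral_unit // char_poly_trig ?diag_mx_is_trig //.
rewrite big_map big_enum /=.
by apply: eq_bigr => i _; rewrite mxE eqxx mulr1n.
Qed.

Lemma eigenvalue_hermitian_real x : x \in s -> x \is Num.real.
Proof.
rewrite (perm_mem eigenvalues_hermitianE) => /mapP[i _ ->].
by have /mxOverP := hermitian_spectral_diag_real A_herm; apply.
Qed.

Lemma mxrank_sqr_sub1 : \rank (A *m A - 1%:M) = count (predC pm1) s.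
Proof.
have P_unitary := spectral_unitarymx A.
have PtP : P^t* *m P = 1%:M by rewrite -invmx_unitary // mulVmx // spectral_unit.
have -> : A *m A - 1%:M = P^t* *m diag_mx (\row_i (d 0 i ^+ 2 - 1)) *m P.
  have -> : diag_mx (\row_i (d 0 i ^+ 2 - 1)) = diag_mx d *m diag_mx d - 1%:M.
    apply/matrixP => i j; rewrite mulmx_diag !mxE.
    by case: eqVneq => _; rewrite ?expr2 ?subr0.
  rewrite [in LHS]hermitian_spectral_decomp !mulmxA mulmxtVK //.
  by rewrite mulmxBr mulmxBl mulmx1 PtP !mulmxA.
rewrite mxrank_unitary_conj // mxrank_diag.
rewrite (permP eigenvalues_hermitianE (predC pm1)) [in RHS]count_map.
by apply: eq_count => i; rewrite mxE /= subr_eq0 sqrf_eq1.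
Qed.

Lemma spectral_formE (x : 'rV_n) (y := x *m P^t*) :
  (x *m A *m x^t*) 0 0 = \sum_k d 0 k * (y 0 k * (y 0 k)^*) /\
  (x *m x^t*) 0 0 = \sum_k y 0 k * (y 0 k)^*.
Proof.
have PtP : P^t* *m P = 1%:M.
  by rewrite -invmx_unitary ?spectral_unitarymx // mulVmx // spectral_unit.
have yt : y^t* = P *m x^t* by rewrite /y trmx_mul map_mxM trmxCK.
split; first by rewrite -diag_formE yt [in LHS]hermitian_spectral_decomp !mulmxA.
have := diag_formE y (const_mx 1).
rewrite diag_const_mx mulmx1 yt mulmxA -(mulmxA x) PtP mulmx1 => ->.
by apply: eq_bigr => k _; rewrite mxE mul1r.
Qed.

Lemma rayleigh_ge c (x : 'rV_n) : {in s, forall y, c <= y} ->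
  c * (x *m x^t*) 0 0 <= (x *m A *m x^t*) 0 0.
Proof.
move=> c_le; have [-> ->] := spectral_formE x; rewrite mulr_sumr.
apply: ler_sum => k _; rewrite ler_wpM2r ?mul_conjC_ge0 // c_le //.
by rewrite (perm_mem eigenvalues_hermitianE) map_f ?mem_enum.
Qed.

Lemma rayleigh_le c (x : 'rV_n) : {in s, forall y, y <= c} ->
  (x *m A *m x^t*) 0 0 <= c * (x *m x^t*) 0 0.
Proof.
move=> le_c; have [-> ->] := spectral_formE x; rewrite mulr_sumr.
apply: ler_sum => k _; rewrite ler_wpM2r ?mul_conjC_ge0 // le_c //.
by rewrite (perm_mem eigenvalues_hermitianE) map_f ?mem_enum.
Qed.

End HermitianSpectrum.

Lemma big_supp3 (V : nmodType) (I : finType) (F : I -> V) a b c :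
  uniq [:: a; b; c] -> (forall i, i \notin [:: a; b; c] -> F i = 0) ->
  \sum_i F i = F a + F b + F c.
Proof.
move=> abc F0; rewrite (bigID (mem [:: a; b; c])) /= [X in _ + X]big1 ?addr0.
  by rewrite -big_uniq // !big_cons big_nil /= addr0 addrA.
by move=> i /F0.
Qed.

Definition no_induced_P3 n (e : rel 'I_n) : Prop :=
  forall a b c, e a b -> e b c -> a != c -> e a c.

Section AdjacencySpectrum.
Variables (n : nat) (e : rel 'I_n).
Hypotheses (esym : symmetric e) (eirr : irreflexive e).

Lemma adjmx_herm : adjmx e \is hermsymmx.
Proof.
apply/is_hermitianmxP; rewrite expr0 scale1r; apply/matrixP=> i j.
by rewrite !mxE esym conjC_nat.
Qed.

Lemma adjmx_sqrE v w :
  (adjmx e *m adjmx e) v w = (#|[set k | e v k && e k w]|)%:R.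
Proof.
rewrite mxE -sum1_card natr_sum [RHS]big_mkcond /=; apply: eq_bigr => k _.
by rewrite !mxE -natrM mulnb inE; case: (_ && _).
Qed.

Lemma perfect_matching_of_adjmx_sqr :
  adjmx e *m adjmx e = 1%:M -> perfect_matching_graph e.
Proof.
move=> /matrixP A2 x; move: (A2 x x); rewrite adjmx_sqrE mxE eqxx => /eqP.
rewrite pnatr_eq1 => /eqP <-.
by apply: eq_card => y; rewrite !inE (esym y x) andbb.
Qed.

Definition path3_vec (a b c : 'I_n) (sg : algC) : 'rV[algC]_n :=
  \row_i (if i == b then sg else ((i == a) || (i == c))%:R).

Lemma path3_formE a b c sg : uniq [:: a; b; c] -> sg^* = sg ->
  e a b -> e b c ->
  let x := path3_vec a b c sg in
  (x *m adjmx e *m x^t*) 0 0 = 4%:R * sg + 2%:R * (e a c)%:R /\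
  (x *m x^t*) 0 0 = 2%:R + sg * sg.
Proof.
move=> abc sgr eab ebc x.
have x0 i : i \notin [:: a; b; c] -> x 0 i = 0.
  by rewrite !inE !negb_or /x mxE => /and3P[/negbTE-> /negbTE-> /negbTE->].
move: (abc); rewrite /= !inE !negb_or andbT => /andP[/andP[ab ac] bc].
have [xa xb xc] : [/\ x 0 a = 1, x 0 b = sg & x 0 c = 1].
  by rewrite /x !mxE !eqxx (negbTE ab) [c == b]eq_sym (negbTE bc) orbT.
have xt i : x^t* i 0 = (x 0 i)^* by rewrite !mxE.
have xA j : (x *m adjmx e) 0 j =
    x 0 a * (e a j)%:R + x 0 b * (e b j)%:R + x 0 c * (e c j)%:R.
  by rewrite mxE (big_supp3 abc) => [|i /x0 ->]; rewrite ?mul0r // !mxE.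
split; rewrite mxE (big_supp3 abc) => [|i /x0]; rewrite ?xt.
- rewrite !xA xa xb xc sgr conjC1 !eirr eab ebc (esym b a) (esym c b).
  by rewrite (esym c a) eab ebc /=; ring.
- by move=> ->; rewrite conjC0 mulr0.
- by rewrite xa xb xc sgr conjC1; ring.
by move=> ->; rewrite mul0r.
Qed.

Lemma adj_neq a b : e a b -> a != b.
Proof. by apply: contraTneq => ->; rewrite eirr. Qed.

Lemma path3_uniq a b c : e a b -> e b c -> a != c -> uniq [:: a; b; c].
Proof. by move=> eab ebc ac; rewrite /= !inE negb_or adj_neq // ac adj_neq. Qed.

Variables (s : seq algC) (hs : eigenvalues_of (adjmx e) s).

Lemma no_induced_P3_spectrum_ge : {in s, forall x, -1 <= x} -> no_induced_P3 e.
Proof.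
move=> ge_N1 a b c eab ebc ac; have abc := path3_uniq eab ebc ac.
have [form norm] := path3_formE abc (rmorphN1 _) eab ebc.
have := rayleigh_ge adjmx_herm hs (path3_vec a b c (-1)) ge_N1.
rewrite form norm -subr_ge0; case: (e a c) => //=.
by rewrite (_ : _ - _ = -1) ?oppr_ge0 ?ler10 //; ring.
Qed.

(* The test vector even rules out every path a - b - c with a != c. *)
Lemma no_induced_P3_spectrum_le : {in s, forall x, x <= 1} -> no_induced_P3 e.
Proof.
move=> le_1 a b c eab ebc ac; have abc := path3_uniq eab ebc ac.
have [form norm] := path3_formE abc (conjC1 _) eab ebc.
have := rayleigh_le adjmx_herm hs (path3_vec a b c 1) le_1.
rewrite form norm -subr_ge0; case: (e a c) => //=.
by rewrite (_ : _ - _ = -1) ?oppr_ge0 ?ler10 //; ring.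
Qed.

End AdjacencySpectrum.

Lemma union_of_cliques_no_P3 n (e : rel 'I_n) :
  no_induced_P3 e -> union_of_cliques e.
Proof.
move=> noP3 x y /connectP[p ep ->] {y}.
elim: p x ep => [|z p IHp] x /=; first by rewrite eqxx.
case/andP => exz ep x_last.
have [->|z_last] := eqVneq (last z p) z; first by [].
by apply: (noP3 x z) => //; apply: IHp; rewrite // eq_sym.
Qed.

Definition nonK2_comps n (e : rel 'I_n) : {set {set 'I_n}} :=
  [set C in comps e | ~~ is_K2_comp C].

(* [comp] alone denotes function composition, hence [Defs.comp] below. *)
Section UnionOfCliques.
Variables (n : nat) (e : rel 'I_n).
Hypotheses (esym : symmetric e) (eirr : irreflexive e) (cliques : union_of_cliques e).

Lemma mem_comp x y : (y \in Defs.comp e x) = connect e x y.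
Proof. by rewrite inE. Qed.

Lemma comp_connect x y : connect e x y -> Defs.comp e x = Defs.comp e y.
Proof.
move=> cxy; apply/setP => z; rewrite !mem_comp.
apply/idP/idP; last exact: connect_trans.
by apply: connect_trans; rewrite (sym_connect_sym esym).
Qed.

Lemma compsP C v : C \in comps e -> v \in C -> C = Defs.comp e v.
Proof. by case/imsetP => x _ -> xv; apply: comp_connect; rewrite -mem_comp. Qed.

Lemma adj_cliquesE v w : e v w = connect e v w && (v != w).
Proof.
apply/idP/andP => [evw|[]]; last exact: cliques.
by split; [apply: connect1 | apply: contraTneq evw => ->; rewrite eirr].
Qed.

Lemma adjmx_sqr_sub1_cliquesE v w : (adjmx e *m adjmx e - 1%:M) v w =
  (connect e v w)%:R * ((#|Defs.comp e v|)%:R - 2).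
Proof.
rewrite [LHS]mxE adjmx_sqrE !mxE.
have [cvw|ncvw] := boolP (connect e v w); last first.
  rewrite (_ : [set k | _] = set0) ?cards0 ?mul0r; last first.
    apply/setP => k; rewrite !inE !adj_cliquesE.
    apply/negP => /andP[/andP[cvk _] /andP[ckw _]].
    by case/negP: ncvw; apply: connect_trans ckw.
  have [vw|_] := eqVneq v w; last by rewrite /= subr0.
  by rewrite vw connect0 in ncvw.
have -> : [set k | e v k && e k w] = Defs.comp e v :\ v :\ w.
  apply/setP => k; rewrite !inE !adj_cliquesE (eq_sym v k).
  have [->|kw] := eqVneq k w; first by rewrite !andbF.
  have [->|kv] := eqVneq k v; first by rewrite !andbF.
  rewrite !andbT andb_idr // => cvk; apply: connect_trans cvw.
  by rewrite (sym_connect_sym esym).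
rewrite [#|Defs.comp e v|](cardsD1 v) [#|Defs.comp e v :\ v|](cardsD1 w).
rewrite !inE connect0 cvw andbT mul1r.
have [<-|vw] /= := eqVneq v w; rewrite !natrD ?mulr1n ?mulr0n /=; ring.
Qed.

Definition nonK2_comp (i : 'I_#|nonK2_comps e|) : {set 'I_n} := enum_val i.

Definition comp_incidence : 'M[algC]_(#|nonK2_comps e|, n) :=
  \matrix_(i, v) (v \in nonK2_comp i)%:R.

Definition comp_weight : 'rV[algC]_(#|nonK2_comps e|) :=
  \row_i ((#|nonK2_comp i|)%:R - 2).

Lemma nonK2_compP i : nonK2_comp i \in comps e /\ ~~ is_K2_comp (nonK2_comp i).
Proof. by have := enum_valP i; rewrite inE => /andP. Qed.

Lemma nonK2_comp_disjoint i j v :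
  v \in nonK2_comp i -> v \in nonK2_comp j -> i = j.
Proof.
have [/compsP Ci _] := nonK2_compP i; have [/compsP Cj _] := nonK2_compP j.
move=> vi vj; apply: enum_val_inj; change (nonK2_comp i = nonK2_comp j).
by rewrite (Ci v) // (Cj v).
Qed.

Lemma comp_incidence_mul_tr :
  comp_incidence *m comp_incidence^T = diag_mx (\row_i (#|nonK2_comp i|)%:R).
Proof.
apply/matrixP => i j; rewrite !mxE.
have [<-|ij] := eqVneq i j.
  rewrite mulr1n -[#|nonK2_comp i|]sum1_card natr_sum [RHS]big_mkcond /=.
  by apply: eq_bigr => v _; rewrite !mxE -natrM mulnb andbb; case: ifP.
rewrite mulr0n big1 // => v _; rewrite !mxE -natrM mulnb.
have [vi|//] := boolP (v \in nonK2_comp i); have [vj|//] := boolP (v \in nonK2_comp j).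
by case/eqP: ij; apply: nonK2_comp_disjoint vi vj.
Qed.

Lemma comp_incidence_free : row_free comp_incidence.
Proof.
have XXt_unit : comp_incidence *m comp_incidence^T \in unitmx.
  rewrite comp_incidence_mul_tr unitmxE det_diag unitfE; apply/prodf_neq0 => i _.
  rewrite mxE pnatr_eq0; have [/imsetP[x _ ->] _] := nonK2_compP i.
  by apply/eqP => /cards0_eq/setP/(_ x); rewrite !inE connect0.
rewrite /row_free eqn_leq rank_leq_row /=.
by have := mxrankM_maxl comp_incidence comp_incidence^T; rewrite mxrank_unit.
Qed.

Lemma adjmx_sqr_sub1_factor : adjmx e *m adjmx e - 1%:M =
  comp_incidence^T *m diag_mx comp_weight *m comp_incidence.
Proof.
apply/matrixP => v w; rewrite adjmx_sqr_sub1_cliquesE mxE.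
under eq_bigr => i _ do rewrite mul_mx_diag !mxE.
have [Cv|Cv] := boolP (Defs.comp e v \in nonK2_comps e).
  pose i0 := enum_rank_in Cv (Defs.comp e v).
  have Ci0 : nonK2_comp i0 = Defs.comp e v by rewrite /nonK2_comp enum_rankK_in.
  rewrite (bigD1 i0) //= big1 ?addr0 => [|i ii0].
    by rewrite Ci0 !mem_comp connect0 mul1r mulrC.
  have [vi|_] := boolP (v \in nonK2_comp i); last by rewrite !mul0r.
  by case/eqP: ii0; apply: nonK2_comp_disjoint vi _; rewrite Ci0 mem_comp connect0.
rewrite big1 => [|i _]; last first.
  have [vi|_] := boolP (v \in nonK2_comp i); last by rewrite !mul0r.
  case/negP: Cv; have [/compsP <- // _] := nonK2_compP i.
  exact: enum_valP.
have Cv_comps : Defs.comp e v \in comps e by apply: imset_f.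
move: Cv; rewrite inE Cv_comps negbK /is_K2_comp => /eqP ->.
by rewrite subrr mulr0.
Qed.

Lemma mxrank_adjmx_sqr_sub1_cliques :
  \rank (adjmx e *m adjmx e - 1%:M) = #|nonK2_comps e|.
Proof.
have W_unit : diag_mx comp_weight \in unitmx.
  rewrite unitmxE det_diag unitfE; apply/prodf_neq0 => i _.
  by rewrite mxE subr_eq0 eqr_nat; have [_] := nonK2_compP i.
rewrite adjmx_sqr_sub1_factor mxrankMfree ?comp_incidence_free //.
rewrite -mxrank_tr trmx_mul tr_diag_mx trmxK eqmxMfull ?row_full_unit //.
exact/eqP/comp_incidence_free.
Qed.

End UnionOfCliques.

Lemma pm1_ge x : pm1 x -> -1 <= x.
Proof. by case/orP => /eqP ->; rewrite // (le_trans (lerN10 _)) ?ler01. Qed.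

Lemma pm1_le x : pm1 x -> x <= 1.
Proof. by case/orP => /eqP ->; rewrite // (le_trans (lerN10 _)) ?ler01. Qed.

Lemma spectrum_geN1 s : {in [seq x <- s | ~~ pm1 x], forall x, -1 <= x} ->
  {in s, forall x, -1 <= x}.
Proof.
move=> ge_N1 x xs; have [/pm1_ge //|x_pm1] := boolP (pm1 x).
by apply: ge_N1; rewrite mem_filter x_pm1.
Qed.

Lemma spectrum_le1 s : {in [seq x <- s | ~~ pm1 x], forall x, x <= 1} ->
  {in s, forall x, x <= 1}.
Proof.
move=> le_1 x xs; have [/pm1_le //|x_pm1] := boolP (pm1 x).
by apply: le_1; rewrite mem_filter x_pm1.
Qed.

Lemma cliques_of_spectrum n (e : rel 'I_n) (s : seq algC) :
  symmetric e -> irreflexive e -> eigenvalues_of (adjmx e) s ->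
  {in [seq x <- s | ~~ pm1 x], forall x, -1 <= x} \/
  {in [seq x <- s | ~~ pm1 x], forall x, x <= 1} ->
  union_of_cliques e /\ #|nonK2_comps e| = count (predC pm1) s.
Proof.
move=> esym eirr hs bounded.
have cliques : union_of_cliques e.
  apply: union_of_cliques_no_P3.
  case: bounded => [/spectrum_geN1|/spectrum_le1].
    exact: no_induced_P3_spectrum_ge.
  exact: no_induced_P3_spectrum_le.
split=> //; rewrite -(mxrank_adjmx_sqr_sub1_cliques esym eirr cliques).
exact/mxrank_sqr_sub1/hs/adjmx_herm.
Qed.

Lemma nonK2_comps_card1 n (e : rel 'I_n) : #|nonK2_comps e| = 1%N ->
  exists2 C, C \in comps e & forall D, D \in comps e -> D != C -> is_K2_comp D.
Proof.
move/eqP/cards1P => [C nonK2E].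
have := set11 C; rewrite -nonK2E inE => /andP[C_comp _].
exists C => // D D_comp DC.
have : D \notin nonK2_comps e by rewrite nonK2E inE.
by rewrite inE D_comp negbK.
Qed.

Theorem proposition2p2 (n : nat) (e : rel 'I_n)
  (esym : symmetric e) (eirr : irreflexive e)
  (s : seq algC) (hs : eigenvalues_of (adjmx e) s) :
  [/\ (all pm1 s -> perfect_matching_graph e),
      (count (predC pm1) s = 1%N ->
         union_of_cliques e /\
         exists2 C, C \in comps e &
           forall D, D \in comps e -> D != C -> is_K2_comp D)
    & (forall r t : algC,
         perm_eq [seq x <- s | ~~ pm1 x] [:: r; t] -> t <= r ->
         (1 < r /\ t < -1) \/
         (union_of_cliques e /\
          #|[set C in comps e | ~~ is_K2_comp C]| = 2%N))].
Proof.
have A_herm := adjmx_herm esym.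
have nonpm1_real x : x \in [seq x <- s | ~~ pm1 x] -> x \is Num.real.
  by rewrite mem_filter => /andP[_ /(eigenvalue_hermitian_real A_herm hs)].
split.
- move=> s_pm1; apply: perfect_matching_of_adjmx_sqr => //; apply/eqP.
  rewrite -subr_eq0 -mxrank_eq0 (mxrank_sqr_sub1 A_herm hs) -leqn0 leqNgt.
  by rewrite -has_count has_predC s_pm1.
- move=> one_nonpm1.
  have : size [seq x <- s | ~~ pm1 x] = 1%N by rewrite size_filter.
  case nonpm1E : [seq x <- s | ~~ pm1 x] => [|l [|]] // _.
  have l_real : l \is Num.real by apply: nonpm1_real; rewrite nonpm1E inE.
  have [cliques one_comp] : union_of_cliques e /\ #|nonK2_comps e| = 1%N.
    rewrite -one_nonpm1; apply: cliques_of_spectrum; rewrite // nonpm1E.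
    case/orP: (real_leVge l_real (@real1 _)) => [l_le1|l_ge1];
      [right|left] => x; rewrite inE => /eqP -> //.
    exact: le_trans (lerN10 _) (le_trans ler01 l_ge1).
  by split; last exact: nonK2_comps_card1.
move=> r t nonpm1E le_tr.
have mem_nonpm1 x : (x \in [seq x <- s | ~~ pm1 x]) = (x == r) || (x == t).
  by rewrite (perm_mem nonpm1E) !inE.
have [r_real t_real] : r \is Num.real /\ t \is Num.real.
  by split; apply: nonpm1_real; rewrite mem_nonpm1 eqxx ?orbT.
have [/andP[r_gt1 t_ltN1]|not_split] := boolP ((1 < r) && (t < -1)); [by left | right].
have <- : size [seq x <- s | ~~ pm1 x] = 2%N by rewrite (perm_size nonpm1E).
rewrite size_filter; apply: cliques_of_spectrum => //.
move: not_split; rewrite negb_and -!real_leNgt ?realN ?real1 //.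
case/orP => [r_le1|t_geN1]; [right|left] => x; rewrite mem_nonpm1 => /orP[] /eqP ->;
  by rewrite ?(le_trans le_tr) ?(le_trans t_geN1).
Qed.
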